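(* A rule defined on $\mathcal{E}_{\mathcal{SP}}$ satisfies own-peak-onliness, efficiency, peak responsiveness, and not obvious manipulability (NOM) if and only if it is a peak responsive simple rule.
   Context: Let $N=\{1,\dots,n\}$ be a finite set of agents. A preference $R_i$ is a continuous complete preorder on $\mathbb{R}_+\cup\{\infty\}$ ($P_i$ strict); its peak $p(R_i)$ is the set of maximal elements. $R_i$ is single-peaked if $p(R_i)$ is a singleton (identified with its element) and for $x,x'\in\mathbb{R}_+$, $xP_ix'$ whenever $x'<x\le p(R_i)$ or $p(R_i)\le x<x'$; $\mathcal{SP}$ is the set of these. An economy is $(R,\Omega)$, $R\in\mathcal{SP}^n$, $\Omega>0$; $\mathcal{E}_{\mathcal{SP}}$ is the set of economies; a rule is a map $\varphi:\mathcal{E}_{\mathcal{SP}}\to\mathbb{R}^n_+$ with $\sum_j\varphi_j(R,\Omega)=\Omega$. Properties: Efficiency: no $x\in\mathbb{R}^n_+$ with $\sum_jx_j=\Omega$ has $x_iR_i\varphi_i(R,\Omega)$ for all $i$ and $x_iP_i\varphi_i(R,\Omega)$ for some $i$. Own-peak-onliness: $p(R_i')=p(R_i)$ implies $\varphi_i(R,\Omega)=\varphi_i(R_i',R_{-i},\Omega)$. Peak responsiveness: for $i\ne j$, $p(R_i)\le p(R_j)$ implies $\varphi_i(R,\Omega)\le\varphi_j(R,\Omega)$. Option set $O^\varphi(R_i,\Omega)=\{\varphi_i(R_i,R_{-i},\Omega):R_{-i}\in\mathcal{SP}^{n-1}\}$; $R_i'$ is a manipulation at $(R_i,\Omega)$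 if $\varphi_i(R_i',R_{-i},\Omega)P_i\varphi_i(R_i,R_{-i},\Omega)$ for some $R_{-i}$, an obvious manipulation if moreover each $x'\in O^\varphi(R_i',\Omega)$ satisfies $x'P_ix$ for some $x\in O^\varphi(R_i,\Omega)$; NOM means no obvious manipulation exists. Simple rules: $z(R,\Omega)=\sum_jp(R_j)-\Omega$; agent $i$ is simple if ($z\ge0$ and $p(R_i)<\Omega/n$) or ($z\le0$ and $p(R_i)>\Omega/n$); $N^+$ is the set of simple agents, $N^-=N\setminus N^+$; $E(R,\Omega)=\left|\Omega-\left(\sum_{j\in N^+}p(R_j)+|N^-|\frac{\Omega}{n}\right)\right|$. An own-peak-only rule is simple if $\varphi_i=p(R_i)$ for $i\in N^+$, $\varphi_i=\frac{\Omega}{n}+\nu_i$ for $i\in N^-$ when $z\ge0$, $\varphi_i=\frac{\Omega}{n}-\nu_i$ for $i\in N^-$ when $z\le0$, with $0\le\nu_i\le|p(R_i)-\frac{\Omega}{n}|$ and $\sum_{j\in N^-}\nu_j=E(R,\Omega)$. *)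

From HB Require Import structures.
From mathcomp Require Import all_boot all_order all_algebra.
From mathcomp Require Import all_classical all_reals all_analysis.
Set Implicit Arguments. Unset Strict Implicit. Unset Printing Implicit Defensive.
Import Order.TTheory GRing.Theory Num.Theory.
Import numFieldNormedType.Exports.
Local Open Scope classical_set_scope.
Local Open Scope ring_scope.

Definition cspace (R : realType) : set (\bar R) := [set x | (0 <= x)%E].

Definition pref (R : realType) := \bar R -> \bar R -> Prop.

Definition strictP (R : realType) (Q : pref R) (x y : \bar R) : Prop :=
  Q x y /\ ~ Q y x.

Definition complete_preorder (R : realType) (Q : pref R) : Prop :=
  (forall x y, cspace x -> cspace y -> Q x y \/ Q y x) /\
  (forall x y z, cspace x -> cspace y -> cspace z -> Q x y -> Q y z -> Q x z).

(* continuity: all upper and lower contour sets are closed in cspace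
   (cspace is closed in \bar R, so closed in \bar R is the same). *)
Definition continuous_pref (R : realType) (Q : pref R) : Prop :=
  forall y, cspace y ->
    closed [set x | cspace x /\ Q x y] /\ closed [set x | cspace x /\ Q y x].

Definition peak_set (R : realType) (Q : pref R) : set (\bar R) :=
  [set x | cspace x /\ forall y, cspace y -> Q x y].

(* the peak, as an element (meaningful when the peak set is a singleton) *)
Definition peak (R : realType) (Q : pref R) : \bar R := xget 0%E (peak_set Q).

Definition single_peaked (R : realType) (Q : pref R) : Prop :=
  complete_preorder Q /\ continuous_pref Q /\
  exists p : \bar R, peak_set Q = [set p] /\
    (forall x x' : R, 0 <= x' -> x' < x -> (x%:E <= p)%E ->
        strictP Q x%:E x'%:E) /\
    (forall x x' : R, 0 <= x -> (p <= x%:E)%E -> x < x' ->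
        strictP Q x%:E x'%:E).

Definition profile (R : realType) (n : nat) := 'I_n -> pref R.

Definition sp_profile (R : realType) (n : nat) (Rp : profile R n) : Prop :=
  forall i, single_peaked (Rp i).

Definition economy (R : realType) (n : nat) (Rp : profile R n) (Om : R) : Prop :=
  sp_profile Rp /\ 0 < Om.

Definition upd (R : realType) (n : nat) (Rp : profile R n) (i : 'I_n) (Q : pref R)
  : profile R n := fun j => if j == i then Q else Rp j.

(* a candidate rule: total map; only its values on E_SP matter *)
Definition rule_fun (R : realType) (n : nat) := profile R n -> R -> 'I_n -> R.

Definition is_rule (R : realType) (n : nat) (phi : rule_fun R n) : Prop :=
  forall Rp Om, economy Rp Om ->
    (forall i, 0 <= phi Rp Om i) /\ \sum_(i < n) phi Rp Om i = Om.

Definition efficient (R : realType) (n : nat) (phi : rule_fun R n) : Prop :=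
  forall Rp Om, economy Rp Om ->
    ~ exists x : 'I_n -> R,
        (forall j, 0 <= x j) /\ \sum_(j < n) x j = Om /\
        (forall i, Rp i (x i)%:E (phi Rp Om i)%:E) /\
        (exists i, strictP (Rp i) (x i)%:E (phi Rp Om i)%:E).

Definition own_peak_only (R : realType) (n : nat) (phi : rule_fun R n) : Prop :=
  forall Rp Om i (Q : pref R), economy Rp Om -> single_peaked Q ->
    peak Q = peak (Rp i) -> phi Rp Om i = phi (upd Rp i Q) Om i.

Definition peak_responsive (R : realType) (n : nat) (phi : rule_fun R n) : Prop :=
  forall Rp Om (i j : 'I_n), economy Rp Om -> i != j ->
    (peak (Rp i) <= peak (Rp j))%E -> phi Rp Om i <= phi Rp Om j.

Definition option_set (R : realType) (n : nat) (phi : rule_fun R n) (i : 'I_n)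
  (Q : pref R) (Om : R) : set R :=
  [set y | exists Rp : profile R n, sp_profile Rp /\ y = phi (upd Rp i Q) Om i].

Definition manipulation (R : realType) (n : nat) (phi : rule_fun R n) (i : 'I_n)
  (Q Q' : pref R) (Om : R) : Prop :=
  single_peaked Q' /\
  exists Rp : profile R n, sp_profile Rp /\
    strictP Q (phi (upd Rp i Q') Om i)%:E (phi (upd Rp i Q) Om i)%:E.

Definition obvious_manipulation (R : realType) (n : nat) (phi : rule_fun R n)
  (i : 'I_n) (Q Q' : pref R) (Om : R) : Prop :=
  manipulation phi i Q Q' Om /\
  forall x', option_set phi i Q' Om x' ->
    exists x, option_set phi i Q Om x /\ strictP Q x'%:E x%:E.

Definition NOM (R : realType) (n : nat) (phi : rule_fun R n) : Prop :=
  forall (i : 'I_n) (Q Q' : pref R) (Om : R),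
    single_peaked Q -> 0 < Om -> ~ obvious_manipulation phi i Q Q' Om.

Definition zexcess (R : realType) (n : nat) (Rp : profile R n) (Om : R) : \bar R :=
  ((\sum_(j < n) peak (Rp j)) - Om%:E)%E.

Definition simple_agent (R : realType) (n : nat) (Rp : profile R n) (Om : R)
  (i : 'I_n) : Prop :=
  ((0 <= zexcess Rp Om)%E /\ (peak (Rp i) < (Om / n%:R)%:E)%E) \/
  ((zexcess Rp Om <= 0)%E /\ ((Om / n%:R)%:E < peak (Rp i))%E).

Definition simple_agentb (R : realType) (n : nat) (Rp : profile R n) (Om : R)
  (i : 'I_n) : bool := `[< simple_agent Rp Om i >].

Definition Eexcess (R : realType) (n : nat) (Rp : profile R n) (Om : R) : \bar R :=
  `| Om%:E - ((\sum_(j < n | simple_agentb Rp Om j) peak (Rp j))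
              + (#|[pred j | ~~ simple_agentb Rp Om j]|%:R * (Om / n%:R))%:E) |%E.

Definition simple_rule (R : realType) (n : nat) (phi : rule_fun R n) : Prop :=
  own_peak_only phi /\
  forall Rp Om, economy Rp Om ->
    (forall i, simple_agent Rp Om i -> (phi Rp Om i)%:E = peak (Rp i)) /\
    exists nu : 'I_n -> R,
      (forall i, ~ simple_agent Rp Om i ->
         0 <= nu i /\ ((nu i)%:E <= `| peak (Rp i) - (Om / n%:R)%:E |)%E) /\
      (\sum_(j < n | ~~ simple_agentb Rp Om j) nu j)%:E = Eexcess Rp Om /\
      ((0 <= zexcess Rp Om)%E ->
         forall i, ~ simple_agent Rp Om i -> phi Rp Om i = Om / n%:R + nu i) /\
      ((zexcess Rp Om <= 0)%E ->
         forall i, ~ simple_agent Rp Om i -> phi Rp Om i = Om / n%:R - nu i).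

From HB Require Import structures.
From mathcomp Require Import all_boot all_order all_algebra.
From mathcomp Require Import all_classical all_reals all_analysis.
From mathcomp Require Import lra.
Set Implicit Arguments. Unset Strict Implicit. Unset Printing Implicit Defensive.
Import Order.TTheory GRing.Theory Num.Theory.
Import numFieldNormedType.Exports.
Local Open Scope classical_set_scope.
Local Open Scope ring_scope.

(* If z >= 0, efficiency keeps every agent weakly below her peak:
   an agent above her peak and one below it would gain from a transfer.  An
   agent strictly below her peak also gets at least Omega/n: otherwise reporting
   the peak +oo is an obvious manipulation, since peak responsiveness gives that
   report at least Omega/n, while a tent preference with her true peak and a
   flat right slope prefers all of [Omega/n, Omega] to her current share, which
   own-peak-onliness keeps in its option set.  (The case z <= 0 is symmetric,
   with the peak 0.)  So simple agents receive their peaks and the others lie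
   between Omega/n and their peaks, which is the simple form with
   nu_i = |phi_i - Omega/n|.  A simple rule gives each agent an amount between Omega/n and
   her peak.  If z >= 0 everybody is weakly below her peak, so a Pareto
   improvement must give everybody weakly more with the same total, and thus
   changes nothing (symmetrically if z <= 0).  And every outcome is weakly
   preferred to Omega/n, which is an option of every report (the unanimous
   profile), so no report obviously dominates the truth. *)

Section SinglePeaked.
Variable R : realType.
Implicit Types (Q : pref R) (x y : R).

Lemma peak_set1 Q p : peak_set Q = [set p] -> peak Q = p.
Proof. by move=> PQ; rewrite /peak PQ; apply: xget_unique. Qed.

Lemma peak_ge0 Q : single_peaked Q -> (0 <= peak Q)%E.
Proof.
by case=> _ [_ [p [PQ _]]]; rewrite (peak_set1 PQ); have [] : peak_set Q p by rewrite PQ.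
Qed.

Lemma sp_incr Q x y : single_peaked Q ->
  0 <= y -> y < x -> (x%:E <= peak Q)%E -> strictP Q x%:E y%:E.
Proof. by case=> _ [_ [p [PQ [incr _]]]]; rewrite (peak_set1 PQ); apply: incr. Qed.

Lemma sp_decr Q x y : single_peaked Q ->
  0 <= x -> (peak Q <= x%:E)%E -> x < y -> strictP Q x%:E y%:E.
Proof. by case=> _ [_ [p [PQ [_ decr]]]]; rewrite (peak_set1 PQ); apply: decr. Qed.

Lemma sp_refl Q (x : \bar R) : single_peaked Q -> (0 <= x)%E -> Q x x.
Proof. by case=> [[total _] _] x0; case: (total x x x0 x0). Qed.

Lemma sp_between Q x y : single_peaked Q -> 0 <= y ->
  (y%:E <= x%:E <= peak Q)%E \/ (peak Q <= x%:E <= y%:E)%E -> Q x%:E y%:E.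
Proof.
move=> Qsp y0; have [-> _|xy] := eqVneq x y; first by apply: sp_refl Qsp _.
rewrite !lee_fin => -[/andP[yx xp]|/andP[px xy']].
- have ltyx : y < x by rewrite lt_neqAle eq_sym xy.
  by have [] := sp_incr Qsp y0 ltyx xp.
- have x0 : 0 <= x by rewrite -lee_fin (le_trans (peak_ge0 Qsp)).
  have ltxy : x < y by rewrite lt_neqAle xy.
  by have [] := sp_decr Qsp x0 px ltxy.
Qed.

Lemma sp_pref_ge Q x y : single_peaked Q -> 0 <= x ->
  (y%:E <= peak Q)%E -> Q x%:E y%:E -> y <= x.
Proof. by move=> Qsp x0 yp xy; rewrite leNgt; apply/negP => /(sp_incr Qsp x0)/(_ yp) []. Qed.

Lemma sp_pref_le Q x y : single_peaked Q -> 0 <= y ->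
  (peak Q <= y%:E)%E -> Q x%:E y%:E -> x <= y.
Proof. by move=> Qsp y0 py xy; rewrite leNgt; apply/negP => /(sp_decr Qsp y0 py) []. Qed.

End SinglePeaked.

Section UtilityPref.
Variable R : realType.

Definition utility_pref (u : \bar R -> \bar R) : pref R := fun x y => (u y <= u x)%E.

Lemma utility_complete_preorder u : complete_preorder (utility_pref u).
Proof.
split=> [x y _ _|x y z _ _ _ xy yz]; last exact: le_trans yz xy.
by case/orP: (le_total (u x) (u y)); [right|left].
Qed.

Lemma utility_strictP u (x y : \bar R) : (u y < u x)%E -> strictP (utility_pref u) x y.
Proof. by move=> lt_uyx; split; [exact: ltW | apply/negP; rewrite -ltNge]. Qed.

End UtilityPref.

Section PreferMore.
Context {R : realType}.

Definition prefer_more : pref R := utility_pref id.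

Lemma peak_set_prefer_more : peak_set prefer_more = [set +oo%E].
Proof.
rewrite /peak_set /prefer_more /utility_pref /cspace.
apply/seteqP; split=> [x [_ xmax]|x ->] /=; last by split=> [|y _]; rewrite ?leey.
by apply/eqP; rewrite eq_le leey; apply: xmax; rewrite /cspace /= le0y.
Qed.

Lemma prefer_more_sp : single_peaked prefer_more.
Proof.
split; first exact: utility_complete_preorder.
split=> [y _|].
  by split; apply: closedI; apply: closed_ereal_le_ereal || apply: closed_ereal_ge_ereal.
exists +oo%E; split; first exact: peak_set_prefer_more.
split=> [x y _ yx _|x y _]; last by rewrite leNgt ltey.
by apply: utility_strictP; rewrite lte_fin.
Qed.

Lemma peak_prefer_more : peak prefer_more = +oo%E.
Proof. exact/peak_set1/peak_set_prefer_more. Qed.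

End PreferMore.

Section Tent.
Variables (R : realType) (s b d : R).
Hypotheses (b_gt0 : 0 < b) (d_gt0 : 0 < d).

Definition tent_utility (x : \bar R) : \bar R :=
  if x is r%:E then (Num.min (b * (r - s)) (d * (s - r)))%:E else -oo%E.

Definition tent : pref R := utility_pref tent_utility.

Lemma tent_utility_ge c t :
  (c%:E <= tent_utility t%:E)%E = (s + b^-1 * c <= t <= s - d^-1 * c).
Proof. by rewrite lee_fin le_min -!ler_pdivrMl // [in RHS]lerBrDr !lerBrDl. Qed.

Lemma tent_utility_le c t :
  (tent_utility t%:E <= c%:E)%E = (t <= s + b^-1 * c) || (s - d^-1 * c <= t).
Proof. by rewrite lee_fin ge_min -!ler_pdivlMl // [in RHS]lerBlDr !lerBlDl. Qed.

Lemma tent_upper_contour c :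
  [set x | cspace x /\ (c%:E <= tent_utility x)%E] =
  [set x | 0 <= x]%E `&` [set x | (s + b^-1 * c)%:E <= x]%E
    `&` [set x | x <= (s - d^-1 * c)%:E]%E.
Proof.
apply/seteqP; split=> -[t| |] //=; rewrite /cspace /= ?tent_utility_ge ?lee_fin //;
  try by move=> [[]].
- by case=> -> /andP[-> ->].
- by case=> [[-> ->] ->].
Qed.

Lemma tent_lower_contour c :
  [set x | cspace x /\ (tent_utility x <= c%:E)%E] =
  [set x | 0 <= x]%E
    `&` ([set x | x <= (s + b^-1 * c)%:E]%E `|` [set x | (s - d^-1 * c)%:E <= x]%E).
Proof.
apply/seteqP; split=> -[t| |] //=;
  rewrite /cspace /= ?tent_utility_le ?lee_fin ?leey ?leNye //;
  try by move=> [[]].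
- by case=> t0 /orP[] ?; split=> //; [left|right].
- by move=> _; split=> //; right.
- by case=> -> [|] ->; rewrite ?orbT.
Qed.

Lemma closed_tent_contours y : cspace y ->
  closed [set x | cspace x /\ tent x y] /\ closed [set x | cspace x /\ tent y x].
Proof.
rewrite /tent /utility_pref; case: y => [r| |] y0; last by [].
  rewrite tent_lower_contour tent_upper_contour; split.
    by apply: closedI; [apply: closedI|];
      apply: closed_ereal_le_ereal || apply: closed_ereal_ge_ereal.
  by apply: closedI; [|apply: closedU];
    apply: closed_ereal_le_ereal || apply: closed_ereal_ge_ereal.
have -> : [set x | cspace x /\ (tent_utility +oo <= tent_utility x)%E] = [set x | 0 <= x]%E.
  by apply/seteqP; split=> x; [case | move=> x0; split; rewrite ?leNye].
have -> : [set x | cspace x /\ (tent_utility x <= tent_utility +oo)%E] = [set x | +oo <= x]%E.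
  by apply/seteqP; split=> -[t| |] //= [].
by split; apply: closed_ereal_le_ereal.
Qed.

Lemma tent_utility_le0 x : (tent_utility x <= 0)%E.
Proof.
case: x => [t| |] //=; rewrite lee_fin ge_min.
by case: (leP t s) => ts; apply/orP; [left|right]; rewrite pmulr_rle0 ?subr_le0 // ltW.
Qed.

Lemma tent_utility_peak : tent_utility s%:E = 0%E.
Proof. by rewrite /= subrr !mulr0 minxx. Qed.

Lemma tent_utility_ge0 x : (0 <= tent_utility x)%E -> x = s%:E.
Proof.
case: x => [t| |] //; rewrite -[0%E]/(0%:E) tent_utility_ge !mulr0 addr0 subr0 => st.
by congr EFin; apply/eqP; rewrite eq_le andbC.
Qed.

Hypothesis s_ge0 : 0 <= s.

Lemma peak_set_tent : peak_set tent = [set s%:E].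
Proof.
rewrite /peak_set /tent /utility_pref /cspace.
apply/seteqP; split=> [x [_ xmax]|x ->].
  by apply: tent_utility_ge0; rewrite -tent_utility_peak xmax // lee_fin.
by split=> [|y _]; rewrite ?lee_fin // tent_utility_peak tent_utility_le0.
Qed.

Lemma tent_sp : single_peaked tent.
Proof.
split; first exact: utility_complete_preorder.
split; first exact: closed_tent_contours.
exists s%:E; split; first exact: peak_set_tent.
split=> [x y _ yx|x y _ + xy]; rewrite lee_fin => sx;
  apply: utility_strictP; rewrite lte_fin lt_min !gt_min.
- have ys : y < s by rewrite (lt_le_trans yx).
  apply/andP; split; apply/orP; left; first by rewrite ltr_pM2l // ltrD2r.
  by rewrite (@lt_le_trans _ _ 0) ?pmulr_rlt0 ?pmulr_rge0 ?subr_lt0 ?subr_ge0.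
- have sy : s < y by rewrite (le_lt_trans sx).
  apply/andP; split; apply/orP; right; last by rewrite ltr_pM2l // ltrD2l ltrN2.
  by rewrite (@lt_le_trans _ _ 0) ?pmulr_rlt0 ?pmulr_rge0 ?subr_lt0 ?subr_ge0.
Qed.

Lemma peak_tent : peak tent = s%:E.
Proof. exact/peak_set1/peak_set_tent. Qed.

End Tent.

Section PreferenceWitnesses.
Variable R : realType.

Lemma exists_sp_prefer_above (x0 r M : R) : 0 <= x0 < r -> 0 <= M ->
  exists2 Q, single_peaked Q /\ peak Q = r%:E &
    forall y, x0 < y <= M -> strictP Q y%:E x0%:E.
Proof.
move=> /andP[x0_ge0 x0r] M_ge0.
have M1_gt0 : 0 < M + 1 by rewrite ltr_wpDl.
(* Flat enough that the right branch stays above the utility x0 - r up to M. *)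
pose k := (r - x0) / (M + 1).
have k_gt0 : 0 < k by rewrite divr_gt0 // subr_gt0.
have kM1 : k * (M + 1) = r - x0 by rewrite divfK ?gt_eqF.
have r_ge0 : 0 <= r by rewrite ltW // (le_lt_trans x0_ge0).
exists (tent r 1 k); first by split; [apply: tent_sp | apply: peak_tent].
move=> y /andP[x0y yM]; apply: utility_strictP; rewrite lte_fin gt_min; apply/orP; left.
by rewrite lt_min !mul1r ltrD2r x0y /=; nra.
Qed.

Lemma exists_sp_prefer_below (x0 r : R) : 0 <= r < x0 ->
  exists2 Q, single_peaked Q /\ peak Q = r%:E &
    forall y, 0 <= y < x0 -> strictP Q y%:E x0%:E.
Proof.
move=> /andP[r_ge0 rx0].
have r1_gt0 : 0 < r + 1 by rewrite ltr_wpDl.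
(* Flat enough that the left branch stays above the utility r - x0 down to 0. *)
pose k := (x0 - r) / (r + 1).
have k_gt0 : 0 < k by rewrite divr_gt0 // subr_gt0.
have kr1 : k * (r + 1) = x0 - r by rewrite divfK ?gt_eqF.
exists (tent r k 1); first by split; [apply: tent_sp | apply: peak_tent].
move=> y /andP[y_ge0 yx0]; apply: utility_strictP; rewrite lte_fin gt_min; apply/orP; right.
by rewrite lt_min !mul1r ltrD2l ltrN2 yx0 andbT; nra.
Qed.

End PreferenceWitnesses.

Section Sums.
Variable R : realType.
Implicit Types (I : finType).

Lemma sum_le_eq I (f g : I -> R) :
  (forall k, f k <= g k) -> \sum_k g k = \sum_k f k -> g =1 f.
Proof.
move=> fg sum_eq k; apply/eqP; rewrite -subr_eq0; apply/eqP.
apply: (@psumr_eq0P _ _ predT (fun k => g k - f k)) => // [{}k _|].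
  by rewrite subr_ge0.
by rewrite sumrB sum_eq subrr.
Qed.

Lemma sum_transfer I (f : I -> R) i j e :
  \sum_k (f k + (if k == i then e else 0) - (if k == j then e else 0)) = \sum_k f k.
Proof. by rewrite sumrB big_split /= -!big_mkcond /= !big_pred1_eq addrK. Qed.

Lemma normr_sum_same_sign I (P : pred I) (F : I -> R) :
  (forall k, P k -> 0 <= F k) \/ (forall k, P k -> F k <= 0) ->
  `|\sum_(k | P k) F k| = \sum_(k | P k) `|F k|.
Proof.
case=> sgn.
  by rewrite ger0_norm ?sumr_ge0 //; apply: eq_bigr => k /sgn /ger0_norm ->.
rewrite ler0_norm ?sumr_le0 // -sumrN.
by apply: eq_bigr => k /sgn /ler0_norm ->.
Qed.

Lemma lte_sum_strict I (a b : I -> \bar R) i :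
  (forall k, a k \is a fin_num) -> (forall k, (a k <= b k)%E) -> (a i < b i)%E ->
  (\sum_k a k < \sum_k b k)%E.
Proof.
move=> a_fin ab abi; rewrite (bigD1 i) // [X in (_ < X)%E](bigD1 i) //=.
by apply: lte_leD => //; [apply/sum_fin_numP => k | apply: lee_sum].
Qed.

End Sums.

Section ExtendedDistance.
Variable R : realType.
Implicit Types (m v x : R) (p : \bar R).

Lemma ereal_gap x c p : (x%:E < p)%E -> 0 < c ->
  exists2 e, 0 < e <= c & ((x + e)%:E <= p)%E.
Proof.
case: p => [r| |] xr c_gt0 //; last by exists c; rewrite ?c_gt0 ?lexx ?leey.
exists (Num.min c (r - x)); first by rewrite lt_min c_gt0 subr_gt0 -lte_fin xr ge_min lexx.
by rewrite lee_fin -lerBrDl ge_min lexx orbT.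
Qed.

Lemma lee_dist_between m x p :
  ((m%:E <= x%:E <= p) \/ (p <= x%:E <= m%:E))%E -> (`|x - m|%:E <= `|p - m%:E|)%E.
Proof.
case: p => [r| |] /= => [|_|_]; try exact: leey.
rewrite !lee_fin => -[/andP[mx xr]|/andP[rx xm]].
  by rewrite !ger0_norm ?subr_ge0 ?lerD2r // (le_trans mx xr).
by rewrite !ler0_norm ?subr_le0 ?lerN2 ?lerD2r // (le_trans rx xm).
Qed.

Lemma lee_add_dist m v p :
  (m%:E <= p)%E -> (v%:E <= `|p - m%:E|)%E -> ((m + v)%:E <= p)%E.
Proof.
case: p => [r| |] //=; rewrite ?leey // !lee_fin => mr.
by rewrite ger0_norm ?subr_ge0 // lerBrDl.
Qed.

Lemma lee_sub_dist m v p :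
  (0 <= p)%E -> (p <= m%:E)%E -> (v%:E <= `|p - m%:E|)%E -> (p <= (m - v)%:E)%E.
Proof.
case: p => [r| |] //=; rewrite !lee_fin => _ rm.
by rewrite ler0_norm ?subr_le0 // opprB lerBrDl lerBrDr.
Qed.

End ExtendedDistance.

Section Profiles.
Variables (R : realType) (n : nat).
Implicit Types (Rp : profile R n) (Q : pref R) (Om : R).

Lemma upd_eq Rp i Q : upd Rp i Q i = Q.
Proof. by rewrite /upd eqxx. Qed.

Lemma sp_profile_upd Rp i Q :
  sp_profile Rp -> single_peaked Q -> sp_profile (upd Rp i Q).
Proof. by move=> Rp_sp Qsp j; rewrite /upd; case: (j == i). Qed.

Lemma economy_upd Rp Om i Q :
  economy Rp Om -> single_peaked Q -> economy (upd Rp i Q) Om.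
Proof. by case=> Rp_sp Om_gt0 Qsp; split=> //; apply: sp_profile_upd. Qed.

Lemma Eexcess_allocation Rp Om (f : 'I_n -> R) :
  \sum_k f k = Om -> (forall i, simple_agent Rp Om i -> (f i)%:E = peak (Rp i)) ->
  Eexcess Rp Om = `|\sum_(j | ~~ simple_agentb Rp Om j) (f j - Om / n%:R)|%:E.
Proof.
move=> f_sum f_simple; rewrite /Eexcess (eq_bigr (fun j => (f j)%:E)); last first.
  by move=> j /asboolP /f_simple.
rewrite sumEFin -EFinD abse_EFin; congr (`|_|%:E).
set S := simple_agentb Rp Om; set m := Om / n%:R.
rewrite sumrB sumr_const -f_sum (bigID S) /= mulr_natl.
by rewrite opprD addrACA subrr add0r.
Qed.

End Profiles.

Section Rule.
Variables (R : realType) (n : nat) (phi : rule_fun R n).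
Hypothesis phi_rule : is_rule phi.
Implicit Types (Rp : profile R n) (Q : pref R) (Om : R).

Lemma rule_ge0 Rp Om i : economy Rp Om -> 0 <= phi Rp Om i.
Proof. by move=> /phi_rule[]. Qed.

Lemma rule_sum Rp Om : economy Rp Om -> \sum_k phi Rp Om k = Om.
Proof. by move=> /phi_rule[]. Qed.

Lemma rule_le_endowment Rp Om i : economy Rp Om -> phi Rp Om i <= Om.
Proof.
move=> E; rewrite -{2}(rule_sum E) (bigD1 i) //= lerDl.
by apply: sumr_ge0 => k _; apply: rule_ge0.
Qed.

Lemma rule_ge_avg_of_max_peak Rp Om i :
  peak_responsive phi -> economy Rp Om ->
  (forall j, (peak (Rp j) <= peak (Rp i))%E) -> Om / n%:R <= phi Rp Om i.
Proof.
move=> pr E peak_max; have n_gt0 : (0 < n)%N by apply: leq_ltn_trans (ltn_ord i).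
rewrite ler_pdivrMr ?ltr0n // -{1}(rule_sum E) mulr_natr.
rewrite -[X in _ *+ X]card_ord -sumr_const.
by apply: ler_sum => j _; have [->|ji] := eqVneq j i; last exact: pr.
Qed.

Lemma rule_le_avg_of_min_peak Rp Om i :
  peak_responsive phi -> economy Rp Om ->
  (forall j, (peak (Rp i) <= peak (Rp j))%E) -> phi Rp Om i <= Om / n%:R.
Proof.
move=> pr E peak_min; have n_gt0 : (0 < n)%N by apply: leq_ltn_trans (ltn_ord i).
rewrite ler_pdivlMr ?ltr0n // -[X in _ <= X](rule_sum E) mulr_natr.
rewrite -[X in _ *+ X]card_ord -sumr_const.
by apply: ler_sum => j _; have [->|ij] := eqVneq i j; last exact: pr.
Qed.

Lemma rule_avg_of_equal_peaks Rp Om i :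
  peak_responsive phi -> economy Rp Om ->
  (forall j, peak (Rp j) = peak (Rp i)) -> phi Rp Om i = Om / n%:R.
Proof.
move=> pr E same_peak; apply/eqP; rewrite eq_le.
by rewrite rule_le_avg_of_min_peak ?rule_ge_avg_of_max_peak // => j; rewrite same_peak.
Qed.

Lemma obvious_manipulation_of_dominated Rp i Q Q' Om x0 :
  single_peaked Q' -> sp_profile Rp -> phi (upd Rp i Q) Om i = x0 ->
  (forall Rp', sp_profile Rp' -> strictP Q (phi (upd Rp' i Q') Om i)%:E x0%:E) ->
  obvious_manipulation phi i Q Q' Om.
Proof.
move=> Q'sp Rp_sp x0E dominated; split.
  by split=> //; exists Rp; split=> //; rewrite x0E; apply: dominated.
move=> _ [Rp' [Rp'_sp ->]]; exists x0; split; last exact: dominated.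
by exists Rp; split.
Qed.

Section Necessity.
Hypotheses (phi_opo : own_peak_only phi) (phi_eff : efficient phi).
Hypotheses (phi_pr : peak_responsive phi) (phi_nom : NOM phi).

Lemma efficient_not_below_above Rp Om i j : economy Rp Om ->
  ((phi Rp Om i)%:E < peak (Rp i))%E -> (peak (Rp j) < (phi Rp Om j)%:E)%E -> False.
Proof.
move=> E below above; set f := phi Rp Om in below above.
have [ri_sp rj_sp] := (E.1 i, E.1 j).
have [rj Erj] : exists rj, peak (Rp j) = rj%:E.
  by move: (peak_ge0 rj_sp) above; case: (peak (Rp j)) => [r| |] //; exists r.
rewrite Erj lte_fin in above; have rj_ge0 : 0 <= rj by rewrite -lee_fin -Erj peak_ge0.
have gap_gt0 : 0 < f j - rj by rewrite subr_gt0.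
have [e /andP[e_gt0 e_le] fi_e] := ereal_gap below gap_gt0.
have ij : i != j by apply: contraTneq below => ->; rewrite Erj -leNgt ltW.
pose x k := f k + (if k == i then e else 0) - (if k == j then e else 0).
have xi : x i = f i + e by rewrite /x eqxx (negbTE ij) subr0.
have xj : x j = f j - e by rewrite /x eq_sym (negbTE ij) eqxx addr0.
have xk k : k != i -> k != j -> x k = f k.
  by rewrite /x => /negbTE-> /negbTE->; rewrite addr0 subr0.
have rj_xj : rj <= x j by rewrite xj lerBrDl addrC -lerBrDl.
have fi_lt : f i < x i by rewrite xi ltrDl.
have xi_peak : ((x i)%:E <= peak (Rp i))%E by rewrite xi.
apply: (phi_eff E); exists x; split; [|split; [|split]].
- move=> k; have [->|ki] := eqVneq k i; first by rewrite (le_trans (rule_ge0 i E)) ?ltW.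
  have [->|kj] := eqVneq k j; first exact: le_trans rj_xj.
  by rewrite xk //; apply: rule_ge0.
- by rewrite sum_transfer rule_sum.
- move=> k; have [->|ki] := eqVneq k i.
    by case: (sp_incr ri_sp (rule_ge0 i E) fi_lt xi_peak).
  have [->|kj] := eqVneq k j.
    have xj_lt : x j < f j by rewrite xj gtrDl oppr_lt0.
    have peak_xj : (peak (Rp j) <= (x j)%:E)%E by rewrite Erj lee_fin.
    by case: (sp_decr rj_sp (le_trans rj_ge0 rj_xj) peak_xj xj_lt).
  by rewrite xk //; apply: sp_refl (E.1 k) _; rewrite lee_fin rule_ge0.
- by exists i; apply: sp_incr ri_sp (rule_ge0 i E) fi_lt xi_peak.
Qed.

Lemma efficient_le_peak Rp Om i : economy Rp Om ->
  (0 <= zexcess Rp Om)%E -> ((phi Rp Om i)%:E <= peak (Rp i))%E.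
Proof.
move=> E; rewrite /zexcess sube_ge0 // => Om_le; rewrite leNgt; apply/negP => above.
have [[j below]|none] := pselect (exists j, ((phi Rp Om j)%:E < peak (Rp j))%E).
  exact: efficient_not_below_above E below above.
have peak_le k : (peak (Rp k) <= (phi Rp Om k)%:E)%E.
  by rewrite leNgt; apply/negP => below; apply: none; exists k.
have peak_fin k : peak (Rp k) \is a fin_num.
  rewrite ge0_fin_numE; first exact: le_lt_trans (peak_le k) (ltey _).
  exact: peak_ge0 (E.1 k).
have := lte_sum_strict peak_fin peak_le above.
by rewrite sumEFin rule_sum // ltNge Om_le.
Qed.

Lemma efficient_ge_peak Rp Om i : economy Rp Om ->
  (zexcess Rp Om <= 0)%E -> (peak (Rp i) <= (phi Rp Om i)%:E)%E.
Proof.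
move=> E; rewrite /zexcess sube_le0 => le_Om; rewrite leNgt; apply/negP => below.
have [[j above]|none] := pselect (exists j, (peak (Rp j) < (phi Rp Om j)%:E)%E).
  exact: efficient_not_below_above E below above.
have le_peak k : ((phi Rp Om k)%:E <= peak (Rp k))%E.
  by rewrite leNgt; apply/negP => above; apply: none; exists k.
have f_fin k : (phi Rp Om k)%:E \is a fin_num by [].
have := lte_sum_strict f_fin le_peak below.
by rewrite sumEFin rule_sum // ltNge le_Om.
Qed.

Lemma rule_ge_avg_below_peak Rp Om i : economy Rp Om ->
  ((phi Rp Om i)%:E < peak (Rp i))%E -> Om / n%:R <= phi Rp Om i.
Proof.
move=> E; have [Rp_sp Om_gt0] := E; set x0 := phi Rp Om i.
case Epeak: (peak (Rp i)) => [r| |] // below; last first.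
  by apply: rule_ge_avg_of_max_peak => // j; rewrite Epeak leey.
rewrite leNgt; apply/negP => below_avg; rewrite lte_fin in below.
have x0_range : 0 <= x0 < r by rewrite below rule_ge0.
have [Q [Qsp Qpeak] better] := exists_sp_prefer_above x0_range (ltW Om_gt0).
apply: (@phi_nom i Q prefer_more Om Qsp Om_gt0).
apply: (obvious_manipulation_of_dominated prefer_more_sp Rp_sp).
  by rewrite -phi_opo // Qpeak Epeak.
move=> Rp' Rp'_sp; have E' := economy_upd i (conj Rp'_sp Om_gt0) prefer_more_sp.
apply: better; rewrite rule_le_endowment // andbT (lt_le_trans below_avg) //.
by apply: rule_ge_avg_of_max_peak => // j; rewrite upd_eq peak_prefer_more leey.
Qed.

Lemma rule_le_avg_above_peak Rp Om i : economy Rp Om ->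
  (peak (Rp i) < (phi Rp Om i)%:E)%E -> phi Rp Om i <= Om / n%:R.
Proof.
move=> E; have [Rp_sp Om_gt0] := E; set x0 := phi Rp Om i.
have := peak_ge0 (Rp_sp i); case Epeak: (peak (Rp i)) => [r| |] // r_ge0 above.
rewrite leNgt; apply/negP => above_avg; rewrite lte_fin in above; rewrite lee_fin in r_ge0.
have x0_range : 0 <= r < x0 by rewrite above r_ge0.
have [Q [Qsp Qpeak] better] := exists_sp_prefer_below x0_range.
pose Q0 := tent (0 : R) 1 1.
have [Q0sp Q0peak] : single_peaked Q0 /\ peak Q0 = 0%E.
  by split; [apply: tent_sp | apply: peak_tent]; rewrite ?ltr01.
apply: (@phi_nom i Q Q0 Om Qsp Om_gt0).
apply: (obvious_manipulation_of_dominated Q0sp Rp_sp).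
  by rewrite -phi_opo // Qpeak Epeak.
move=> Rp' Rp'_sp; have E' := economy_upd i (conj Rp'_sp Om_gt0) Q0sp.
apply: better; rewrite rule_ge0 // (le_lt_trans _ above_avg) //.
by apply: rule_le_avg_of_min_peak => // j; rewrite upd_eq Q0peak; apply: peak_ge0 (E'.1 j).
Qed.

Lemma simple_agent_peak Rp Om : economy Rp Om ->
  forall i, simple_agent Rp Om i -> (phi Rp Om i)%:E = peak (Rp i).
Proof.
move=> E i [[z_ge0 peak_lt]|[z_le0 peak_gt]]; apply/eqP; rewrite eq_le.
  rewrite efficient_le_peak //= leNgt; apply/negP => below.
  have := rule_ge_avg_below_peak E below.
  by rewrite leNgt -lte_fin (lt_trans below peak_lt).
rewrite efficient_ge_peak // andbT leNgt; apply/negP => above.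
have := rule_le_avg_above_peak E above.
by rewrite leNgt -lte_fin (lt_trans peak_gt above).
Qed.

Lemma nonsimple_agent_demand Rp Om i : economy Rp Om -> (0 <= zexcess Rp Om)%E ->
  ~ simple_agent Rp Om i -> ((Om / n%:R)%:E <= (phi Rp Om i)%:E <= peak (Rp i))%E.
Proof.
move=> E z_ge0 nonsimple; have le_peak := efficient_le_peak i E z_ge0.
have avg_le_peak : ((Om / n%:R)%:E <= peak (Rp i))%E.
  by rewrite leNgt; apply/negP => lt; apply: nonsimple; left.
rewrite le_peak andbT; move: le_peak; rewrite le_eqVlt => /orP[/eqP->//|below].
by rewrite lee_fin rule_ge_avg_below_peak.
Qed.

Lemma nonsimple_agent_supply Rp Om i : economy Rp Om -> (zexcess Rp Om <= 0)%E ->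
  ~ simple_agent Rp Om i -> (peak (Rp i) <= (phi Rp Om i)%:E <= (Om / n%:R)%:E)%E.
Proof.
move=> E z_le0 nonsimple; have ge_peak := efficient_ge_peak i E z_le0.
have peak_le_avg : (peak (Rp i) <= (Om / n%:R)%:E)%E.
  by rewrite leNgt; apply/negP => lt; apply: nonsimple; right.
rewrite ge_peak /=; move: ge_peak; rewrite le_eqVlt => /orP[/eqP<-//|above].
by rewrite lee_fin rule_le_avg_above_peak.
Qed.

Lemma simple_rule_of_axioms : simple_rule phi.
Proof.
split=> // Rp Om E; split; first exact: simple_agent_peak.
set m := Om / n%:R; set f := phi Rp Om; set z := zexcess Rp Om.
have demand := nonsimple_agent_demand E; have supply := nonsimple_agent_supply E.
exists (fun i => `|f i - m|); split; [|split; [|split]].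
- move=> i nonsimple; split=> //; apply: lee_dist_between.
  by have [/demand/(_ nonsimple)|/ltW/supply/(_ nonsimple)] := leP 0%E z; [left|right].
- rewrite (Eexcess_allocation (rule_sum E) (simple_agent_peak E)) normr_sum_same_sign //.
  have [z_ge0|/ltW z_le0] := leP 0%E z; [left|right] => i /asboolPn nonsimple.
    by rewrite subr_ge0 -lee_fin; case/andP: (demand i z_ge0 nonsimple).
  by rewrite subr_le0 -lee_fin; case/andP: (supply i z_le0 nonsimple).
- move=> z_ge0 i /(demand i z_ge0) /andP[m_le _]; rewrite lee_fin in m_le.
  by rewrite ger0_norm ?subr_ge0 // addrC subrK.
- move=> z_le0 i /(supply i z_le0) /andP[_ le_m]; rewrite lee_fin in le_m.
  by rewrite ler0_norm ?subr_le0 // opprK addrC subrK.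
Qed.

End Necessity.

Section Sufficiency.
Hypothesis phi_simple : simple_rule phi.

Lemma simple_rule_demand Rp Om i : economy Rp Om -> (0 <= zexcess Rp Om)%E ->
  (phi Rp Om i)%:E = peak (Rp i) \/
  ((Om / n%:R)%:E <= (phi Rp Om i)%:E <= peak (Rp i))%E.
Proof.
move=> E z_ge0; have [at_peak [nu [nu_bound [_ [nu_up _]]]]] := phi_simple.2 Rp Om E.
have [simple|nonsimple] := pselect (simple_agent Rp Om i); first by left; apply: at_peak.
right; have [nu_ge0 nu_le] := nu_bound i nonsimple.
have avg_le_peak : ((Om / n%:R)%:E <= peak (Rp i))%E.
  by rewrite leNgt; apply/negP => lt; apply: nonsimple; left.
by rewrite (nu_up z_ge0 i nonsimple) lee_fin lerDl nu_ge0 lee_add_dist.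
Qed.

Lemma simple_rule_supply Rp Om i : economy Rp Om -> (zexcess Rp Om <= 0)%E ->
  (phi Rp Om i)%:E = peak (Rp i) \/
  (peak (Rp i) <= (phi Rp Om i)%:E <= (Om / n%:R)%:E)%E.
Proof.
move=> E z_le0; have [at_peak [nu [nu_bound [_ [_ nu_down]]]]] := phi_simple.2 Rp Om E.
have [simple|nonsimple] := pselect (simple_agent Rp Om i); first by left; apply: at_peak.
right; have [nu_ge0 nu_le] := nu_bound i nonsimple.
have peak_le_avg : (peak (Rp i) <= (Om / n%:R)%:E)%E.
  by rewrite leNgt; apply/negP => lt; apply: nonsimple; right.
rewrite (nu_down z_le0 i nonsimple) lee_fin lerBlDr lerDl nu_ge0 andbT.
by apply: lee_sub_dist => //; apply: peak_ge0 (E.1 i).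
Qed.

Lemma simple_rule_efficient : efficient phi.
Proof.
move=> Rp Om E [x [x_ge0 [x_sum [x_pref [i x_better]]]]].
suff x_eq : x =1 phi Rp Om by case: x_better; rewrite x_eq.
have sum_eq : \sum_k x k = \sum_k phi Rp Om k by rewrite x_sum rule_sum.
have [z_ge0|/ltW z_le0] := leP 0%E (zexcess Rp Om).
  apply: sum_le_eq sum_eq => k; apply: sp_pref_ge (E.1 k) (x_ge0 k) _ (x_pref k).
  by case: (simple_rule_demand k E z_ge0) => [->|/andP[]].
have le_x k : x k <= phi Rp Om k.
  apply: sp_pref_le (E.1 k) (rule_ge0 k E) _ (x_pref k).
  by case: (simple_rule_supply k E z_le0) => [<-|/andP[]].
by move=> k; rewrite (sum_le_eq le_x).
Qed.

Lemma simple_rule_between Rp Om i : economy Rp Om ->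
  ((Om / n%:R)%:E <= (phi Rp Om i)%:E <= peak (Rp i))%E \/
  (peak (Rp i) <= (phi Rp Om i)%:E <= (Om / n%:R)%:E)%E.
Proof.
move=> E; have [z_ge0|/ltW z_le0] := leP 0%E (zexcess Rp Om).
  case: (simple_rule_demand i E z_ge0) => [->|]; last by left.
  by case/orP: (le_total (Om / n%:R)%:E (peak (Rp i))) => h; [left|right]; rewrite h lexx.
case: (simple_rule_supply i E z_le0) => [->|]; last by right.
by case/orP: (le_total (Om / n%:R)%:E (peak (Rp i))) => h; [left|right]; rewrite h lexx.
Qed.

Lemma simple_rule_prefers_avg Rp Om i : economy Rp Om ->
  Rp i (phi Rp Om i)%:E (Om / n%:R)%:E.
Proof.
move=> E; apply: sp_between (E.1 i) _ (simple_rule_between i E).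
by rewrite divr_ge0 // (ltW E.2).
Qed.

Lemma simple_rule_NOM : peak_responsive phi -> NOM phi.
Proof.
move=> pr i Q Q' Om Qsp Om_gt0 [[Q'sp _] dominated].
pose Rp' : profile R n := fun=> Q'.
have E' : economy (upd Rp' i Q') Om by apply: economy_upd; first split.
have avg_option : phi (upd Rp' i Q') Om i = Om / n%:R.
  by apply: rule_avg_of_equal_peaks => // j; rewrite upd_eq /upd; case: ifP.
have avg_in_options : option_set phi i Q' Om (Om / n%:R).
  by exists Rp'; split.
have [x [[Rp [Rp_sp ->]] better]] := dominated _ avg_in_options.
have := simple_rule_prefers_avg i (economy_upd i (conj Rp_sp Om_gt0) Qsp).
by rewrite upd_eq; case: better.
Qed.

End Sufficiency.

End Rule.

Theorem proposition4 (R : realType) (n : nat) (phi : rule_fun R n) :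
  is_rule phi ->
  (own_peak_only phi /\ efficient phi /\ peak_responsive phi /\ NOM phi <->
   simple_rule phi /\ peak_responsive phi).
Proof.
move=> phi_rule; split=> [[opo [eff [pr nom]]]|[simple pr]].
  by split=> //; apply: simple_rule_of_axioms.
split; first exact: simple.1.
split; first exact: simple_rule_efficient.
by split=> //; apply: simple_rule_NOM.
Qed.
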